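(* Let $n\ge3$ be odd, $d,R\in\mathbb{Q}$, $d\ne0$, $R$ not a square, $D=d^2-R$, $\zeta$ a primitive $n$th root of unity and $K=\mathbb{Q}(\sqrt R(\zeta-\zeta^{-1}))$. If $f_n=f_n(Z,d,R)$ has a zero in $\mathbb{Q}$, then the splitting field $L\subseteq\mathbb{C}$ of $f_n$ over $\mathbb{Q}$ equals $K$.
   Context: $f_n(Z,d,R)=\sum_{j=0}^{(n-1)/2}(-1)^j\frac{n}{n-j}\binom{n-j}{j}D^jZ^{n-2j}-2dD^{(n-1)/2}$, which equals $\sqrt D^{\,n}F_n(Z/\sqrt D)-2dD^{(n-1)/2}$ where $F_n(Z)=2T_n(Z/2)$ and $T_n$ is the Chebyshev polynomial of the first kind. *)

(* complex numbers are modelled by algC (algebraic complex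
   numbers); all numbers involved are algebraic. *)
From HB Require Import structures.
From mathcomp Require Import all_boot all_order all_algebra all_field.
Set Implicit Arguments. Unset Strict Implicit. Unset Printing Implicit Defensive.
Import Order.TTheory GRing.Theory Num.Theory.
Local Open Scope ring_scope.

Definition Dval (d R : rat) : rat := d ^+ 2 - R.

(* f_n(Z,d,R) = sum_{j=0}^{(n-1)/2} (-1)^j n/(n-j) C(n-j,j) D^j Z^{n-2j}
                - 2 d D^{(n-1)/2};   for n odd, (n-1)/2 = n./2 *)
Definition fpoly (n : nat) (d R : rat) : {poly rat} :=
  \sum_(j < n./2.+1)
     ((-1) ^+ j * (n%:R / (n - j)%:R) * ('C(n - j, j))%:R * Dval d R ^+ j)
       *: 'X^(n - 2 * j)
  - (2 * d * Dval d R ^+ n./2)%:P.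

Definition gen_field (S : algC -> Prop) (x : algC) : Prop :=
  forall P : algC -> Prop,
    (forall s, S s -> P s) ->
    P 0 -> P 1 ->
    (forall a b, P a -> P b -> P (a + b)) ->
    (forall a, P a -> P (- a)) ->
    (forall a b, P a -> P b -> P (a * b)) ->
    (forall a, P a -> P (a^-1)) ->
    P x.

Definition splitting_field_C (p : {poly rat}) : algC -> Prop :=
  gen_field (fun z => root (map_poly ratr p) z).

From HB Require Import structures.
From mathcomp Require Import all_boot all_order all_algebra all_field.
From mathcomp Require Import ring zify.
Import Order.TTheory GRing.Theory Num.Theory.
Local Open Scope ring_scope.

(* Proof of Corollary 1.  Write m = (n-1)/2, D = d^2 - R (nonzero since R is
   not a square) and r = sqrt R.
   1. f_n(Z) = D_n(Z, D) - 2dD^m where D_n is the Dickson polynomial, which is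
      characterised by D_n(v + D/v, D) = v^n + (D/v)^n (Dickson coefficients
      and their recursion come first).
   2. Hence, writing any z in C as z = v + D/v, z is a root of f_n iff w = v^n
      solves w^2 - 2dD^m w + D^(2m)(d^2 - R) = 0, i.e. w = D^m (d +- r).  As
      v |-> D/v swaps the two cases, the roots of f_n are exactly
      zeta^k v0 + D/(zeta^k v0) for one fixed v0 with v0^n = D^m (d + r).
   3. If the root x = v0 + D/v0 is rational, expanding v0^n and (D/v0)^n in
      Q(v0 - D/v0) shows v0 - D/v0 = c r with c rational and nonzero.
   4. So every root is (x (zeta^k + zeta^-k) + c r (zeta^k - zeta^-k)) / 2,
      which lies in K = Q(r (zeta - zeta^-1)) since n is odd; conversely the
      generator of K is the difference of two roots divided by c. *)

(* Dickson coefficients: [dickson_coef n j] is the coefficient of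
   (-a)^j x^(n-2j) in the Dickson polynomial D_n(x, a), i.e. the j-th
   coefficient produced by D_0 = 2, D_1 = x, D_(n+2) = x D_(n+1) - a D_n. *)
Fixpoint dickson_coef (n j : nat) : nat :=
  match n with
  | 0 => if j == 0%N then 2%N else 0%N
  | 1 => if j == 0%N then 1%N else 0%N
  | (n'.+1 as m).+1 => (dickson_coef m j + (if j is j'.+1 then dickson_coef n' j' else 0))%N
  end.

Lemma dickson_coefSS n j :
  dickson_coef n.+2 j = (dickson_coef n.+1 j + (if j is j'.+1 then dickson_coef n j' else 0))%N.
Proof. by []. Qed.

Lemma dickson_coef_eq0 n j : (n < j.*2)%N -> dickson_coef n j = 0%N.
Proof.
elim/ltn_ind: n j => [[|[|n]]] IH j H.
- by case: j H => [|[]].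
- by case: j H => [|[]].
rewrite dickson_coefSS (IH n.+1) //; last lia.
case: j H => [|j] H //; rewrite (IH n) //; lia.
Qed.

Lemma dickson_coef_binom n j : (0 < n)%N -> (j < n)%N ->
  dickson_coef n j = ('C(n - j, j) + (if j is i.+1 then 'C((n - i).-2, i) else 0))%N.
Proof.
elim/ltn_ind: n j => [[|[|[|n]]]] IH j // _ Hj.
- by case: j Hj => [|[]].
- by case: j Hj => [|[|[]]].
case: j Hj => [|i] Hi; rewrite dickson_coefSS.
  by rewrite (IH n.+2) // !subn0 !bin0.
case: (ltnP i n.+1) => Hin; last first.
  have -> : i = n.+1 by lia.
  rewrite !dickson_coef_eq0; try lia.
  have -> : (n.+3 - n.+2 = 1)%N by lia.
  have -> : ((n.+3 - n.+1).-2 = 0)%N by lia.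
  by rewrite !bin_small.
have -> : (n.+3 - i.+1 = (n - i).+2)%N by lia.
have -> : ((n.+3 - i).-2 = (n - i).+1)%N by lia.
rewrite (IH n.+2 (ltnSn _) i.+1 isT Hin).
have -> : (n.+2 - i.+1 = (n - i).+1)%N by lia.
have -> : ((n.+2 - i).-2 = (n - i))%N by lia.
case: i Hi Hin => [|i] Hi Hin.
  by rewrite (IH n.+1) // !subn0 !bin0 !binS !bin0; lia.
rewrite (IH n.+1 (ltnW (ltnSn _)) i.+1 isT ltac:(lia)).
have -> : (n.+1 - i.+1 = (n - i.+1).+1)%N by lia.
have -> : ((n.+1 - i).-2 = (n - i.+1))%N by lia.
by rewrite !binS; lia.
Qed.

(* The classical form of the coefficients: (n - j) c_(n,j) = n C(n-j, j),
   i.e. c_(n,j) = n/(n-j) C(n-j, j) as in the definition of f_n. *)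
Lemma dickson_coef_mul n j : (0 < n)%N -> (j < n)%N ->
  ((n - j) * dickson_coef n j = n * 'C(n - j, j))%N.
Proof.
move=> Hn Hj; rewrite dickson_coef_binom //.
case: j Hj => [|i] Hi; first by rewrite subn0 addn0.
have := mul_bin_diag (n - i.+1) i.
have -> : ((n - i.+1).-1 = (n - i).-2)%N by lia.
by move=> E; rewrite mulnDr E; lia.
Qed.
Arguments dickson_coef : simpl never.

Section DicksonSum.
Variables (F : fieldType) (a x : F).

Definition dickson_sum (N n : nat) : F :=
  \sum_(j < N) (dickson_coef n j)%:R * (-a) ^+ j * x ^+ (n - 2 * j).

Lemma dickson_sum_widen N M n : (n < N.*2)%N -> (N <= M)%N ->
  dickson_sum M n = dickson_sum N n.
Proof.
move=> HnN; elim: M => [|M IH] HM; first by have -> : N = 0%N by lia.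
case: (ltngtP N M.+1) HM => // [HNM _|->] //.
rewrite -IH; last lia.
by rewrite /dickson_sum big_ord_recr /= dickson_coef_eq0 ?mul0r ?addr0 //; lia.
Qed.

Lemma dickson_sumSS N n : (n.+1 <= N)%N ->
  dickson_sum N.+1 n.+2 = x * dickson_sum N.+1 n.+1 - a * dickson_sum N n.
Proof.
move=> HN; rewrite /dickson_sum.
under eq_bigr => j _ do rewrite dickson_coefSS natrD !mulrDl.
rewrite big_split [X in _ + X = _]big_ord_recl /= !mul0r add0r.
rewrite mulr_sumr; congr (_ + _).
  apply: eq_bigr => j _; case: (leqP (2 * j) n.+1) => Hj.
    have -> : (n.+2 - 2 * j = (n.+1 - 2 * j).+1)%N by lia.
    by rewrite exprS; ring.
  by rewrite dickson_coef_eq0 ?mul0r ?mulr0 //; lia.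
rewrite mulr_sumr -sumrN; apply: eq_bigr => j _.
have -> : (n.+2 - 2 * j.+1 = n - 2 * j)%N by rewrite /bump /=; lia.
by rewrite /bump /= exprS; ring.
Qed.

Lemma dickson_sum_joukowski v N n : v != 0 -> x = v + a / v -> (n < N)%N ->
  dickson_sum N n = v ^+ n + (a / v) ^+ n.
Proof.
move=> vnz xE; elim/ltn_ind: n N => [[|[|n]]] IH N HN.
- rewrite (@dickson_sum_widen 1%N) //; try lia.
  by rewrite /dickson_sum big_ord1 /dickson_coef /= !expr0; ring.
- rewrite (@dickson_sum_widen 1%N) //; try lia.
  by rewrite /dickson_sum big_ord1 xE /dickson_coef /= !expr0 !expr1 mulr1 mul1r.
case: N HN => // N HN.
rewrite dickson_sumSS; last lia.
rewrite (IH n.+1) //; last lia.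
rewrite (IH n) //; last lia.
by rewrite xE !exprS; field.
Qed.
End DicksonSum.

Lemma fpoly_dickson n d R : (0 < n)%N ->
  fpoly n d R = \sum_(j < n./2.+1)
       ((dickson_coef n j)%:R * (- Dval d R) ^+ j) *: 'X^(n - 2 * j)
     - (2 * d * Dval d R ^+ n./2)%:P.
Proof.
move=> Hn; rewrite /fpoly; congr (_ - _); apply: eq_bigr => j _; congr (_ *: _).
have Hj2 : (j.*2 <= n)%N by rewrite -geq_half_double -ltnS.
have Hj : (j < n)%N by lia.
have Hnj : ((n - j)%:R : rat) != 0 by rewrite pnatr_eq0; lia.
have -> : ((dickson_coef n j)%:R : rat) = n%:R / (n - j)%:R * 'C(n - j, j)%:R.
  apply: (mulfI Hnj); rewrite mulrA [_ * (n%:R / _)]mulrC divfK //.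
  by rewrite -!natrM dickson_coef_mul.
by rewrite [(- Dval d R) ^+ j]exprNn; ring.
Qed.

Lemma fpoly_joukowski (F : numFieldType) n d R (v : F) : (0 < n)%N -> v != 0 ->
  let D := ratr (Dval d R) : F in
  (map_poly ratr (fpoly n d R)).[v + D / v] =
  v ^+ n + (D / v) ^+ n - ratr (2 * d * Dval d R ^+ n./2).
Proof.
move=> Hn vnz D.
rewrite fpoly_dickson // rmorphB /= rmorph_sum /= hornerD hornerN horner_sum.
rewrite map_polyC hornerC /=; congr (_ - _).
rewrite -(@dickson_sum_joukowski _ D _ v n.+1 n vnz erefl) //.
rewrite (@dickson_sum_widen _ _ _ n./2.+1 n.+1 n); first last.
- by rewrite ltnS leq_half_double; lia.
- by rewrite -ltn_half_double.
apply: eq_bigr => j _.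
by rewrite map_polyZ map_polyXn hornerZ hornerXn rmorphM rmorphXn rmorphN rmorph_nat.
Qed.

Section GenField.
Variable S : algC -> Prop.
Local Notation G := (gen_field S).

Lemma gen_field_gen s : S s -> G s. Proof. by move=> Hs P HS *; apply: HS. Qed.
Lemma gen_field0 : G 0. Proof. by move=> P *. Qed.
Lemma gen_field1 : G 1. Proof. by move=> P *. Qed.

Lemma gen_fieldD a b : G a -> G b -> G (a + b).
Proof. by move=> Ha Hb P HS H0 H1 HD HN HM HV; apply: (HD); [apply: (Ha P) | apply: (Hb P)]. Qed.

Lemma gen_fieldN a : G a -> G (- a).
Proof. by move=> Ha P HS H0 H1 HD HN HM HV; apply: (HN); apply: (Ha P). Qed.

Lemma gen_fieldM a b : G a -> G b -> G (a * b).
Proof. by move=> Ha Hb P HS H0 H1 HD HN HM HV; apply: (HM); [apply: (Ha P) | apply: (Hb P)]. Qed.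

Lemma gen_fieldV a : G a -> G (a^-1).
Proof. by move=> Ha P HS H0 H1 HD HN HM HV; apply: (HV); apply: (Ha P). Qed.

Lemma gen_fieldB a b : G a -> G b -> G (a - b).
Proof. by move=> Ha Hb; apply: gen_fieldD => //; apply: gen_fieldN. Qed.

Lemma gen_field_div a b : G a -> G b -> G (a / b).
Proof. by move=> Ha Hb; apply: gen_fieldM => //; apply: gen_fieldV. Qed.

Lemma gen_fieldX a k : G a -> G (a ^+ k).
Proof.
by move=> Ha; elim: k => [|k IH]; [exact: gen_field1 | rewrite exprS; apply: gen_fieldM].
Qed.

Lemma gen_field_nat k : G k%:R.
Proof.
by elim: k => [|k IH]; [exact: gen_field0 | rewrite mulrS; apply: gen_fieldD; first exact: gen_field1].
Qed.

Lemma gen_field_Crat c : c \in Crat -> G c.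
Proof.
have G_int (z : int) : G z%:~R.
  case: z => k; first exact: gen_field_nat.
  by rewrite NegzE mulrNz; apply: gen_fieldN; apply: gen_field_nat.
move/CratP=> [q ->].
rewrite -[q]divq_num_den fmorph_div !rmorph_int.
by apply: gen_field_div.
Qed.
End GenField.

Lemma gen_field_min (S T : algC -> Prop) x :
  (forall s, S s -> gen_field T s) -> gen_field S x -> gen_field T x.
Proof.
move=> HST; apply => //.
- exact: gen_fieldD.
- exact: gen_fieldN.
- exact: gen_fieldM.
- exact: gen_fieldV.
Qed.

Lemma joukowski_surj (C : numClosedFieldType) (D z : C) : D != 0 ->
  exists2 v, v != 0 & v + D / v = z.
Proof.
move=> Dnz; set s := sqrtC (z ^+ 2 - 4 * D).
have s2 : s ^+ 2 = z ^+ 2 - 4 * D by rewrite sqrtCK.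
have zs_nz : z + s != 0.
  apply: (contraNneq _ Dnz) => zs0.
  have sE : s = - z by apply/eqP; rewrite -addr_eq0 addrC zs0.
  by move: s2; rewrite sE sqrrN => /eqP; rewrite -subr_eq0 opprB addrC addrNK mulf_eq0 pnatr_eq0.
exists ((z + s) / 2); first by rewrite mulf_eq0 negb_or zs_nz invr_eq0 pnatr_eq0.
have -> : D = (z ^+ 2 - s ^+ 2) / 4 by rewrite s2; field.
by field.
Qed.

Lemma conj_powers (x s : algC) k : x \in Crat -> s ^+ 2 \in Crat ->
  exists a b, [/\ a \in Crat, b \in Crat, ((x + s) / 2) ^+ k = a + b * s &
              ((x - s) / 2) ^+ k = a - b * s].
Proof.
move=> Hx Hs; elim: k => [|k [a [b [Ha Hb E1 E2]]]].
  by exists 1, 0; split; rewrite ?rpred0 ?rpred1 ?expr0 ?mul0r ?addr0 ?subr0.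
exists ((a * x + b * s ^+ 2) / 2), ((a + b * x) / 2); split.
- by apply: rpred_div; [apply: rpredD; apply: rpredM | apply: rpred_nat].
- by apply: rpred_div; [apply: rpredD => //; apply: rpredM | apply: rpred_nat].
- by rewrite exprSr E1; field.
- by rewrite exprSr E2; field.
Qed.

Section Corollary.
Variables (n : nat) (d R : rat) (zeta : algC).
Hypotheses (n_odd : odd n) (R_nsq : ~ exists q : rat, q ^+ 2 = R)
  (zeta_prim : n.-primitive_root zeta).

Local Notation m := (n./2).
Local Notation D := (ratr (Dval d R) : algC).
Local Notation M := (ratr (Dval d R) ^+ m : algC).
Local Notation dc := (ratr d : algC).
Local Notation r := (sqrtC (ratr R : algC)).
Local Notation P := (map_poly (ratr : rat -> algC) (fpoly n d R)).

Lemma n_gt0 : (0 < n)%N. Proof. by case: n n_odd. Qed.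

(* n = 2m + 1 *)
Lemma expr_n (y : algC) : y ^+ n = (y ^+ m) ^+ 2 * y.
Proof. by rewrite -{1}(odd_double_half n) n_odd add1n exprS -mul2n mulnC exprM mulrC. Qed.

Lemma D_neq0 : D != 0.
Proof.
rewrite fmorph_eq0; apply/negP => /eqP D0; apply: R_nsq; exists d.
by apply/eqP; rewrite -subr_eq0 -D0.
Qed.

Lemma M_neq0 : M != 0. Proof. by rewrite expf_neq0 // D_neq0. Qed.

Lemma r_sq : r ^+ 2 = ratr R. Proof. exact: sqrtCK. Qed.

Lemma r_neq0 : r != 0.
Proof.
apply/negP => /eqP r0; apply: R_nsq; exists 0; apply/eqP.
have /eqP : ratr R = 0 :> algC by rewrite -r_sq r0 expr0n.
by rewrite fmorph_eq0 expr0n eq_sym.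
Qed.

Lemma D_factor s : s ^+ 2 = ratr R -> D = (dc + s) * (dc - s).
Proof. by move=> s2; rewrite /Dval rmorphB rmorphXn /= -s2; ring. Qed.

Lemma dc_add_neq0 s : s ^+ 2 = ratr R -> dc + s != 0.
Proof. by move=> s2; have := D_neq0; rewrite (D_factor _ s2) mulf_eq0 negb_or => /andP[]. Qed.

Lemma zeta_n : zeta ^+ n = 1. Proof. exact: prim_expr_order zeta_prim. Qed.

Lemma zeta_neq0 : zeta != 0.
Proof. by apply: contra_eq_neq zeta_n => ->; rewrite expr0n gtn_eqF ?n_gt0 // eq_sym oner_eq0. Qed.

Lemma fpoly_root_factor v : v != 0 ->
  P.[v + D / v] = (v ^+ n - M * (dc + r)) * (v ^+ n - M * (dc - r)) / v ^+ n.
Proof.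
move=> vnz; rewrite fpoly_joukowski ?n_gt0 // expr_div_n (expr_n D).
rewrite !rmorphM rmorphXn rmorph_nat; move: M => M'.
by rewrite (D_factor _ r_sq); field; rewrite expf_neq0.
Qed.

Lemma dual_power u s : u != 0 -> s ^+ 2 = ratr R ->
  u ^+ n = M * (dc + s) -> (D / u) ^+ n = M * (dc - s).
Proof.
move=> unz s2 un; rewrite expr_div_n (expr_n D) un.
have := dc_add_neq0 _ s2; move: M_neq0; move: M => M' M'nz sdnz.
by rewrite {1}(D_factor _ s2); field; rewrite M'nz sdnz.
Qed.

Lemma root_joukowski u : u != 0 -> u ^+ n = M * (dc + r) -> root P (u + D / u).
Proof. by move=> unz un; rewrite /root fpoly_root_factor // un subrr !mul0r. Qed.

Lemma root_normal v : v != 0 -> root P (v + D / v) ->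
  exists u, [/\ u != 0, u ^+ n = M * (dc + r) & u + D / u = v + D / v].
Proof.
move=> vnz; rewrite /root fpoly_root_factor // !mulf_eq0 invr_eq0 expf_eq0.
rewrite (negbTE vnz) andbF orbF !subr_eq0 => /orP[/eqP vn | /eqP vn].
  by exists v.
exists (D / v); split.
- by rewrite mulf_eq0 negb_or D_neq0 invr_eq0.
- by rewrite -[r]opprK; apply: dual_power; rewrite ?sqrrN ?r_sq.
- by field; rewrite vnz D_neq0.
Qed.

Lemma roots_orbit v0 z : v0 != 0 -> v0 ^+ n = M * (dc + r) -> root P z ->
  exists k : nat, z = zeta ^+ k * v0 + D / (zeta ^+ k * v0).
Proof.
move=> v0nz v0n Pz.
have [v vnz vz] := @joukowski_surj _ _ z D_neq0.
have [u [unz un uv]] := root_normal _ vnz (etrans (congr1 _ vz) Pz).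
have [k zk] : {k : 'I_n | u / v0 = zeta ^+ k}.
  by apply: (prim_rootP zeta_prim); rewrite expr_div_n un v0n divff // -v0n expf_neq0.
by exists k; rewrite -zk divfK // uv vz.
Qed.

(* A rational root x = v0 + D/v0 forces v0 - D/v0 to be a rational multiple
   of sqrt R: compare v0^n and (D/v0)^n, which are conjugate in Q(v0 - D/v0). *)
Lemma rational_root_shape v0 x : v0 != 0 -> v0 ^+ n = M * (dc + r) ->
  x \in Crat -> v0 + D / v0 = x ->
  exists c, [/\ c \in Crat, c != 0 & v0 - D / v0 = c * r].
Proof.
move=> v0nz v0n Hx xE; set s := v0 - D / v0.
have Hs2 : s ^+ 2 \in Crat.
  have -> : s ^+ 2 = x ^+ 2 - 4 * D by rewrite -xE /s; field.
  by apply: rpredB; [apply: rpredX | apply: rpredM; [apply: rpred_nat | apply: Crat_rat]].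
have [a [b [_ Hb E1 E2]]] := conj_powers x s n Hx Hs2.
have v0E : (x + s) / 2 = v0 by rewrite -xE /s; field.
have Dv0E : (x - s) / 2 = D / v0 by rewrite -xE /s; field.
rewrite v0E v0n in E1; rewrite Dv0E (dual_power _ _ v0nz r_sq v0n) in E2.
have bs : b * s = M * r.
  have -> : b * s = ((a + b * s) - (a - b * s)) / 2 by field.
  by rewrite -E1 -E2; field.
have bnz : b != 0.
  by apply: contraNneq (mulf_neq0 M_neq0 r_neq0) => b0; rewrite -bs b0 mul0r.
exists (M / b); split.
- by apply: rpred_div => //; apply/rpredX/Crat_rat.
- by rewrite mulf_neq0 ?invr_eq0 ?M_neq0.
- by apply: (mulfI bnz); rewrite bs; field.
Qed.

Local Notation A k := (zeta ^+ k + (zeta ^+ k)^-1).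
Local Notation B k := (r * (zeta ^+ k - (zeta ^+ k)^-1)).
Local Notation K := (gen_field (fun z => z = r * (zeta - zeta^-1))).

Lemma K_B1 : K (B 1). Proof. by apply: gen_field_gen; rewrite expr1. Qed.

Lemma K_A2 : K (A 2).
Proof.
have -> : A 2 = B 1 ^+ 2 / ratr R + 2.
  move: r_sq r_neq0 zeta_neq0; move: (sqrtC _) zeta => s y <- snz ynz.
  by field; rewrite ynz snz.
apply: gen_fieldD; last exact: gen_field_nat.
by apply: gen_field_div; [apply: gen_fieldX; exact: K_B1 | apply: gen_field_Crat; apply: Crat_rat].
Qed.

Lemma A_rec k : A k.+4 = A 2 * A k.+2 - A k.
Proof.
have := zeta_neq0; rewrite !exprSr expr0 mul1r.
by move: (zeta ^+ k) (expf_neq0 k zeta_neq0) => y ynz zn; field; rewrite ynz zn.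
Qed.

Lemma B_rec k : B k.+4 = A 2 * B k.+2 - B k.
Proof.
have := zeta_neq0; rewrite !exprSr expr0 mul1r.
by move: (zeta ^+ k) (expf_neq0 k zeta_neq0) => y ynz zn; field; rewrite ynz zn.
Qed.

Lemma K_A_even j : K (A (2 * j)) /\ K (A (2 * j).+2).
Proof.
elim: j => [|j [IH1 IH2]].
  by split; [rewrite muln0 expr0 invr1; apply: gen_fieldD; apply: gen_field1 | exact: K_A2].
rewrite mulnS; split => //.
by rewrite A_rec; apply: gen_fieldB => //; apply: gen_fieldM => //; exact: K_A2.
Qed.

Lemma K_B_odd j : K (B (2 * j).+1) /\ K (B (2 * j).+3).
Proof.
elim: j => [|j [IH1 IH2]].
  split; first exact: K_B1.
  have -> : B 3 = A 2 * B 1 + B 1.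
    by have := zeta_neq0; rewrite !exprSr expr0 mul1r => zn; field; rewrite zn.
  by apply: gen_fieldD; [apply: gen_fieldM; [exact: K_A2 | exact: K_B1] | exact: K_B1].
rewrite mulnS; split => //.
by rewrite (B_rec (2 * j).+1); apply: gen_fieldB => //; apply: gen_fieldM => //; exact: K_A2.
Qed.

(* Since n is odd, one of k and k + n has each parity, and zeta^(k+n) = zeta^k. *)
Lemma K_A k : K (A k).
Proof.
have zetaD : zeta ^+ (k + n) = zeta ^+ k by rewrite exprD zeta_n mulr1.
case Hk: (odd k); last by rewrite -(odd_double_half k) Hk add0n -mul2n; exact: (K_A_even _).1.
rewrite -zetaD -(odd_double_half (k + n)) oddD Hk n_odd add0n -mul2n.
exact: (K_A_even _).1.
Qed.

Lemma K_B k : K (B k).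
Proof.
have zetaD : zeta ^+ (k + n) = zeta ^+ k by rewrite exprD zeta_n mulr1.
case Hk: (odd k); first by rewrite -(odd_double_half k) Hk add1n -mul2n; exact: (K_B_odd _).1.
rewrite -zetaD -(odd_double_half (k + n)) oddD Hk n_odd add1n -mul2n.
exact: (K_B_odd _).1.
Qed.

Lemma root_in_K v0 x c k : v0 != 0 -> c \in Crat -> x \in Crat ->
  v0 + D / v0 = x -> v0 - D / v0 = c * r ->
  K (zeta ^+ k * v0 + D / (zeta ^+ k * v0)).
Proof.
move=> v0nz Hc Hx xE sE.
have -> : zeta ^+ k * v0 + D / (zeta ^+ k * v0) =
   ((v0 + D / v0) * A k + (v0 - D / v0) * (zeta ^+ k - (zeta ^+ k)^-1)) / 2.
  by move: (zeta ^+ k) (expf_neq0 k zeta_neq0) => y ynz; field; rewrite ynz v0nz.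
rewrite xE sE -mulrA; apply: gen_field_div; last exact: gen_field_nat.
by apply: gen_fieldD; apply: gen_fieldM;
  first [exact: gen_field_Crat | exact: K_A | exact: K_B].
Qed.

Lemma splitting_field_eq_K : (exists q : rat, root (fpoly n d R) q) ->
  forall y, splitting_field_C (fpoly n d R) y <-> K y.
Proof.
move=> [q Pq] y.
have Pqc : root P (ratr q) by rewrite rmorph_root.
have [v vnz vq] := @joukowski_surj _ _ (ratr q) D_neq0.
have [v0 [v0nz v0n v0v]] := root_normal _ vnz (etrans (congr1 _ vq) Pqc).
have xE : v0 + D / v0 = ratr q by rewrite v0v.
have [c [Hc cnz sE]] := rational_root_shape _ _ v0nz v0n (Crat_rat q) xE.
split; apply: gen_field_min => z.
  move=> Pz; have [k ->] := roots_orbit _ _ v0nz v0n Pz.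
  exact: (root_in_K _ _ _ _ v0nz Hc (Crat_rat q) xE sE).
move=> ->; set w1 := zeta * v0; set w2 := zeta^-1 * v0.
have E : r * (zeta - zeta^-1) = ((w1 + D / w1) - (w2 + D / w2)) / c.
  by rewrite /w1 /w2 -[r](mulKf cnz) -sE; field; rewrite cnz zeta_neq0 v0nz.
have unit_pow u : u ^+ n = 1 -> (u * v0) ^+ n = M * (dc + r) by rewrite exprMn => ->; rewrite mul1r.
rewrite E; apply: gen_field_div; last exact: gen_field_Crat.
apply: gen_fieldB; apply: gen_field_gen; apply: root_joukowski.
- by rewrite mulf_neq0 ?zeta_neq0.
- by rewrite unit_pow ?zeta_n.
- by rewrite mulf_neq0 ?invr_eq0 ?zeta_neq0.
- by rewrite unit_pow // exprVn zeta_n invr1.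
Qed.
End Corollary.

Theorem corollary1 (n : nat) (d R : rat) (zeta : algC) :
  odd n -> (3 <= n)%N -> d != 0 -> ~ (exists q : rat, q ^+ 2 = R) ->
  n.-primitive_root zeta ->
  (exists q : rat, root (fpoly n d R) q) ->
  forall x : algC,
    splitting_field_C (fpoly n d R) x <->
    gen_field (fun z => z = sqrtC (ratr R) * (zeta - zeta^-1)) x.
Proof. by move=> n_odd _ _ R_nsq zeta_prim; apply: splitting_field_eq_K. Qed.
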